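(* Let $Q=(M,\Omega)$ be a $3$-sheltering matroid on ground set $U$. The following are equivalent: (1) $M$ is binary, $r(M)\le|\Omega|$, and every class $\omega\in\Omega$ belongs to the cycle space of $M$; (2) there is a looped simple graph $G$ and a matroid isomorphism $M\to M[IAS(G)]$ that maps the classes of $\Omega$ onto the vertex triples of $G$.
   Context: A sheltering matroid is a pair $Q=(M,\Omega)$ where $M$ is a matroid on a finite set $U$ and $\Omega$ a partition of $U$ such that for every independent set $I$ of $M$ meeting each class in at most one element, and every $2$-element subset $\{x,y\}$ of a class $\omega$ with $\omega\cap I=\emptyset$, $I\cup\{x\}$ or $I\cup\{y\}$ is independent in $M$. It is a $3$-sheltering matroid if all classes of $\Omega$ have size $3$. The cycle space of a binary matroid $M$ on $U$ is the set of subsets of $U$ that are disjoint unions (equivalently symmetric differences) of circuits; for a binary representation, these are the sets of columns summing to $0$. A looped simple graph is a finite graph in which each vertex carries at most one loop and no two distinct vertices are joined by more than one edge. $A(G)$ is the $V(G)\times V(G)$ matrix over $GF(2)$ with diagonal entry $1$ exactly at looped vertices and off-diagonal entry $1$ exactly for adjacent distinct vertices. $IAS(G)=(I\mid A(G)\mid A(G)+I)$ over $GF(2)$, rows indexed by $V(G)$; the $v$-columns of the three blocks are labelled $\phi_G(v),\chi_G(v),\psi_G(v)$. $M[IAS(G)]$ is the binary column matroid of $IAS(G)$ on $W(G)=\{\phi_G(v),\chi_G(v),\psi_G(v):v\in V(G)\}$, and the vertex triple of $v$ is $\{\phi_G(v),\chi_G(v),\psi_G(v)\}$. *)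

From HB Require Import structures.
From mathcomp Require Import all_boot all_order all_algebra.
Set Implicit Arguments. Unset Strict Implicit. Unset Printing Implicit Defensive.
Import GRing.Theory.
Local Open Scope ring_scope.

Record matroid (U : finType) := Matroid {
  indep : {set U} -> bool;
  indep0 : indep set0;
  indep_sub : forall A B : {set U}, B \subset A -> indep A -> indep B;
  indep_aug : forall A B : {set U}, indep A -> indep B -> (#|A| < #|B|)%N ->
                exists2 x, x \in B :\: A & indep (x |: A)
}.

Definition mrank (U : finType) (M : matroid U) : nat :=
  \max_(I : {set U} | indep M I) #|I|.

Definition circuit (U : finType) (M : matroid U) (C : {set U}) : Prop :=
  ~~ indep M C /\ (forall D : {set U}, D \proper C -> indep M D).

Definition in_cycle_space (U : finType) (M : matroid U) (C : {set U}) : Prop :=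
  exists P : {set {set U}},
    [/\ forall c, c \in P -> circuit M c, trivIset P & cover P = C].

Definition binary (U : finType) (M : matroid U) : Prop :=
  exists (n : nat) (col : U -> 'rV['F_2]_n),
    forall I : {set U}, indep M I = free [seq col x | x in I].

Definition sheltering (U : finType) (M : matroid U) (Omega : {set {set U}}) : Prop :=
  partition Omega [set: U] /\
  forall I : {set U}, indep M I ->
    (forall w, w \in Omega -> (#|w :&: I| <= 1)%N) ->
    forall w, w \in Omega -> w :&: I = set0 ->
    forall x y, x \in w -> y \in w -> x != y ->
      indep M (x |: I) || indep M (y |: I).

Definition three_sheltering (U : finType) (M : matroid U) (Omega : {set {set U}}) : Prop :=
  sheltering M Omega /\ forall w, w \in Omega -> #|w| = 3%N.

(* A looped simple graph on vertex type V is a symmetric relation e on V;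
   e v v means v is looped, e v w (v != w) means v, w adjacent. *)
Definition adjmx (V : finType) (e : rel V) : 'M['F_2]_#|V| :=
  \matrix_(i, j) (e (enum_val i) (enum_val j))%:R.

(* W(G) = V * 'I_3, where (v,0) = phi_G(v), (v,1) = chi_G(v), (v,2) = psi_G(v).
   The column of IAS(G) labelled by an element of W(G) (as a row vector). *)
Definition ias_col (V : finType) (e : rel V) (a : V * 'I_3) : 'rV['F_2]_#|V| :=
  let phi := (col (enum_rank a.1) (1%:M : 'M['F_2]_#|V|))^T in
  let chi := (col (enum_rank a.1) (adjmx e))^T in
  match nat_of_ord a.2 with
  | 0%N => phi
  | 1%N => chi
  | _ => chi + phi
  end.

Definition ias_indep (V : finType) (e : rel V) (I : {set V * 'I_3}) : bool :=
  free [seq ias_col e a | a in I].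

Definition vertex_triple (V : finType) (v : V) : {set V * 'I_3} :=
  [set a | a.1 == v].

(* Over GF(2) the cycle space of a represented matroid consists exactly of the sets
   whose columns sum to zero.  Hence (2) gives (1): M[IAS(G)] is binary, its rank is at
   most |V(G)| = |Omega|, and the columns phi, chi, chi + phi of a vertex triple sum to zero.

   For (1) gives (2), take a maximum independent partial transversal B of Omega.  A class
   missed by B would extend B by the sheltering property, so B meets every class, and as
   |Omega| >= r(M), B is a basis.  Use B as the vertex set and replace every column by its
   coordinate vector on B.  A class {v, x, y} with v in B has coordinates e_v, c, c + e_v
   (the class sums to zero): this is the vertex triple of v in the looped graph whose
   adjacency column at v is c.  A second use of the sheltering property shows that this
   adjacency is symmetric. *)

From mathcomp Require Import all_boot all_order all_algebra.
From mathcomp Require Import zify.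
From Stdlib Require Import Classical.
Set Implicit Arguments. Unset Strict Implicit. Unset Printing Implicit Defensive.

Import GRing.Theory.
Local Open Scope ring_scope.

Section LinIndep.
Variables (K : fieldType) (vT : lmodType K) (T : finType).
Implicit Types (g : T -> vT) (I C : {set T}).

Definition lin_indep g I : Prop :=
  forall k : T -> K, \sum_(x in I) k x *: g x = 0 -> forall x, x \in I -> k x = 0.

Lemma eq_lin_indep g1 g2 I : g1 =1 g2 -> lin_indep g1 I <-> lin_indep g2 I.
Proof.
move=> eq_g; split=> gI k sum0; apply: gI; rewrite -[RHS]sum0;
  by apply: eq_bigr => x _; rewrite eq_g.
Qed.

Lemma lin_dependP g I : ~ lin_indep g I ->
  exists2 k : T -> K, \sum_(x in I) k x *: g x = 0 & exists2 x, x \in I & k x != 0.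
Proof.
move=> dep; apply: NNPP => none; apply: dep => k sum0 x xI; apply/eqP; apply: NNPP => kx.
by apply: none; exists k => //; exists x => //; apply/negP.
Qed.

Lemma lin_indep_sum0 g C : C != set0 -> \sum_(x in C) g x = 0 -> ~ lin_indep g C.
Proof.
case/set0Pn=> x xC sum0 gC.
have /eqP := gC (fun=> 1) (etrans (eq_bigr _ (fun y _ => scale1r (g y))) sum0) x xC.
by rewrite oner_eq0.
Qed.

Lemma lin_indepU1_span g I x : lin_indep g I -> x \notin I -> ~ lin_indep g (x |: I) ->
  exists k : T -> K, g x = \sum_(y in I) k y *: g y.
Proof.
move=> gI xI /lin_dependP[k]; rewrite big_setU1 //= => sum0 [y yxI ky].
have kx : k x != 0.
  apply: contraNneq ky => kx; move: yxI; rewrite in_setU1 => /predU1P[->|yI].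
    by rewrite kx.
  by apply/eqP; apply: (gI k) yI; rewrite -[RHS]sum0 kx scale0r add0r.
exists (fun y => - (k x)^-1 * k y).
apply: (scalerI kx); rewrite scaler_sumr.
under eq_bigr do rewrite scalerA mulrA mulrN mulfV // mulN1r scaleNr.
by rewrite sumrN; apply/eqP; rewrite -addr_eq0 sum0.
Qed.

End LinIndep.

Lemma lin_indep_imset (K : fieldType) (vT : lmodType K) (T T' : finType)
    (f : T -> T') (h : T' -> vT) (I : {set T}) :
  injective f -> lin_indep h (f @: I) <-> lin_indep (h \o f) I.
Proof.
move=> inj_f; have inj_fI : {in I &, injective f} by move=> ? ? _ _; apply: inj_f.
split=> hI k sum0.
- pose k' y := if [pick x | f x == y] is Some x then k x else 0.
  have k'E x : k' (f x) = k x.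
    by rewrite /k'; case: pickP => [x' /eqP/inj_f -> // | /(_ x)]; rewrite eqxx.
  move=> x xI; rewrite -k'E; apply: hI; last exact: imset_f.
  by rewrite big_imset //= -[RHS]sum0; apply: eq_bigr => y _; rewrite k'E.
- move=> _ /imsetP[x xI ->]; apply: (hI (k \o f)) xI.
  by rewrite -[RHS]sum0 big_imset.
Qed.

Lemma free_imageP (K : fieldType) (vT : vectType K) (T : finType)
    (g : T -> vT) (I : {set T}) :
  free [seq g x | x in I] <-> lin_indep g I.
Proof.
rewrite /image_mem; set s := enum I.
have s_uniq : uniq s := enum_uniq _.
have sumE (k : T -> K) : \sum_(x in I) k x *: g x = \sum_(x <- s) k x *: g x.
  by rewrite big_enum.
have size_gs : size (map g s) = size s by rewrite size_map.
split.
- move=> /(freeP (X := in_tuple (map g s))) /= gs_free k sum0 x xI.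
  have xs : x \in s by rewrite mem_enum.
  have ix : (index x s < size (map g s))%N by rewrite size_gs index_mem.
  have := gs_free (fun i => k (nth x s i)) _ (Ordinal ix); rewrite /= nth_index //.
  apply; rewrite sumE (big_nth x) in sum0; rewrite -[RHS]sum0 size_gs big_mkord.
  by apply: eq_bigr => i _; rewrite (nth_map x) // -size_gs.
- move=> gI; apply/(freeP (X := in_tuple (map g s))) => /= k sum0 i.
  have lti : (i < size s)%N by rewrite -size_gs.
  have /card_gt0P[x0 _] : (0 < #|I|)%N by rewrite cardE (leq_ltn_trans _ lti).
  pose kk y := if insub (index y s) is Some j then k j else 0.
  have kkE (j : 'I_(size (map g s))) : kk (nth x0 s j) = k j.
    rewrite /kk index_uniq -?size_gs // insubT //= => ?; congr (k _); exact: val_inj.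
  rewrite -kkE; apply: gI; last by rewrite -mem_enum mem_nth.
  rewrite sumE (big_nth x0) -[RHS]sum0.
  have -> : \sum_(j < size (map g s)) k j *: (map g s)`_j =
            \sum_(j < size (map g s)) kk (nth x0 s j) *: g (nth x0 s j).
    by apply: eq_bigr => j _; rewrite kkE (nth_map x0) // -size_gs.
  by rewrite (big_mkord xpredT (fun j => kk (nth x0 s j) *: g (nth x0 s j))) size_gs.
Qed.

Section Coordinates.
Variables (K : fieldType) (vT : lmodType K) (T V : finType).
Variables (b : V -> vT) (g : T -> vT) (r : T -> 'rV[K]_#|V|).
Hypothesis b_free : forall c : V -> K, \sum_u c u *: b u = 0 -> forall u, c u = 0.
Hypothesis gE : forall x, g x = \sum_u r x 0 (enum_rank u) *: b u.

Lemma lin_indep_coords J : lin_indep g J <-> lin_indep r J.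
Proof.
have sumE (k : T -> K) : \sum_(x in J) k x *: g x =
    \sum_u (\sum_(x in J) k x *: r x) 0 (enum_rank u) *: b u.
  under eq_bigr do rewrite gE scaler_sumr.
  rewrite exchange_big; apply: eq_bigr => u _.
  by rewrite summxE scaler_suml; apply: eq_bigr => x _; rewrite mxE scalerA.
split=> indepJ k sum0.
- apply: indepJ; rewrite sumE sum0; apply: big1 => u _.
  by rewrite mxE scale0r.
- apply: indepJ; apply/rowP => j; rewrite mxE -(enum_valK j).
  exact: (b_free (etrans (esym (sumE k)) sum0)).
Qed.

End Coordinates.

Lemma lin_indepU1_row (K : fieldType) (T : finType) n (g : T -> 'rV[K]_n)
    (I : {set T}) x (j : 'I_n) :
  lin_indep g I -> x \notin I -> {in I, forall y, g y 0 j = 0} -> g x 0 j != 0 ->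
  lin_indep g (x |: I).
Proof.
move=> gI xI gIj gxj; apply: NNPP => /(lin_indepU1_span gI xI)[k gxE].
move: gxj; rewrite gxE summxE big1 ?eqxx // => y yI.
by rewrite mxE gIj // mulr0.
Qed.

Section Char2.

Lemma F2_0or1 (c : 'F_2) : c = 0 \/ c = 1.
Proof. by case: c => [[|[|]]] // ?; [left | right]; apply: val_inj. Qed.

Lemma F2_nat_eq1 (c : 'F_2) : (c == 1)%:R = c.
Proof. by case: (F2_0or1 c) => ->. Qed.

Variable vT : lmodType 'F_2.
Implicit Types v : vT.

Lemma F2_addrr v : v + v = 0.
Proof. by rewrite -[v]scale1r -scalerDl (_ : 1 + 1 = 0) ?scale0r //; apply: val_inj. Qed.

Lemma F2_oppr v : - v = v.
Proof. by apply/eqP; rewrite eq_sym -addr_eq0 F2_addrr. Qed.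

End Char2.

Section Matroid.
Variables (U : finType) (M : matroid U).
Implicit Types (I C D : {set U}).

Lemma indep_card_le_mrank I : indep M I -> (#|I| <= mrank M)%N.
Proof.
by move=> indepI; rewrite /mrank (leq_bigmax_cond (F := fun J : {set U} => #|J|) _ indepI).
Qed.

Lemma circuit_neq0 C : circuit M C -> C != set0.
Proof. by case=> depC _; apply: contraNneq depC => ->; exact: indep0. Qed.

Lemma dep_sub_circuit C : ~~ indep M C -> exists2 D : {set U}, D \subset C & circuit M D.
Proof.
move=> depC; pose P (D : {set U}) := (D \subset C) && ~~ indep M D.
have PC : P C by rewrite /P subxx.
case: (arg_minnP (fun D => #|D|) PC) => D /andP[DC depD] minD.
exists D => //; split=> // E /[dup] ltED /properP[ED _].
apply: contraTT (proper_card ltED) => depE.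
by rewrite -leqNgt minD // /P depE (subset_trans ED).
Qed.

Lemma mrank_le_dim (K : fieldType) n (g : U -> 'rV[K]_n) :
  (forall I, indep M I <-> lin_indep g I) -> (mrank M <= n)%N.
Proof.
move=> gM; apply/bigmax_leqP => I /gM/free_imageP freeI.
have := dimvS (subvf <<[seq g x | x in I]>>%VS).
by rewrite (eqP freeI) size_map -cardE dimvf /dim /= mul1n.
Qed.

Section Binary.
Variables (vT : lmodType 'F_2) (g : U -> vT).
Hypothesis gM : forall I, indep M I <-> lin_indep g I.

Lemma circuit_sum0 C : circuit M C -> \sum_(x in C) g x = 0.
Proof.
case=> /negP depC minC.
have /lin_dependP[k sum0 [x0 x0C kx0]] : ~ lin_indep g C by move/gM.
pose S := [set x in C | k x != 0].
have SC : S \subset C by apply/subsetP => x; rewrite inE => /andP[].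
have sumS : \sum_(x in S) g x = 0.
  rewrite -[RHS]sum0 [RHS](big_setID S) /= (setIidPr SC) [X in _ = _ + X]big1 ?addr0.
    apply: eq_bigr => x; rewrite inE => /andP[_ kx].
    by case: (F2_0or1 (k x)) kx => ->; rewrite ?eqxx ?scale1r.
  by move=> x; rewrite !inE negb_and negbK => /andP[/orP[/negP//|/eqP->] _]; rewrite scale0r.
case: (eqVneq S C) => [<- // | neqSC].
have /minC/gM indepS : S \proper C by rewrite properEneq neqSC.
exfalso; apply: lin_indep_sum0 sumS indepS.
by apply/set0Pn; exists x0; rewrite inE x0C.
Qed.

Lemma in_cycle_spaceP C : in_cycle_space M C <-> \sum_(x in C) g x = 0.
Proof.
split=> [[P [circP triP <-]] | ].
  by rewrite big_trivIset //; apply: big1 => D /circP/circuit_sum0.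
(* Peel off a circuit contained in [C]: the rest of [C] still sums to zero. *)
elim: {C}#|C| {-2}C (leqnn #|C|) => [|m IHm] C leCm sum0.
  exists set0; split=> [? | | ]; rewrite ?inE // /trivIset /cover !big_set0 ?cards0 //.
  by apply/esym/cards0_eq/eqP; rewrite -leqn0.
have [-> | neqC0] := eqVneq C set0; first by apply: IHm; rewrite ?cards0 ?big_set0.
have depC : ~~ indep M C by apply/negP => /gM; apply: lin_indep_sum0 sum0.
have [D DC circD] := dep_sub_circuit depC.
have leCDm : (#|C :\: D| <= m)%N.
  have := card_gt0 D; rewrite circuit_neq0 // cardsD (setIidPr DC); lia.
have sumCD : \sum_(x in C :\: D) g x = 0.
  by move: sum0; rewrite (big_setID D) /= (setIidPr DC) circuit_sum0 // add0r.
have [P [circP triP coverP]] := IHm _ leCDm sumCD.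
have [triDP notDP] : trivIset (D |: P) /\ D \notin P.
  apply: trivIsetU1 => //; last by apply/negP => /circP/circuit_neq0; rewrite eqxx.
  move=> B PB; rewrite disjoint_sym disjoints_subset; apply/subsetP => x xB.
  have : x \in cover P by apply/bigcupP; exists B.
  by rewrite coverP !inE => /andP[].
exists (D |: P); split=> //.
  by move=> B /setU1P[-> | /circP].
by rewrite /cover big_setU1 //= -/(cover P) coverP -{1}(setIidPr DC) setID.
Qed.

End Binary.

End Matroid.

Notation i_phi := (@Ordinal 3 0 isT).
Notation i_chi := (@Ordinal 3 1 isT).
Notation i_psi := (@Ordinal 3 2 isT).

Section IAS.
Variables (V : finType) (e : rel V).

Lemma ias_col_phi v j : ias_col e (v, i_phi) 0 j = (j == enum_rank v)%:R.
Proof. by rewrite /ias_col /= !mxE. Qed.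

Lemma ias_col_chi v j : ias_col e (v, i_chi) 0 j = (e (enum_val j) v)%:R.
Proof. by rewrite /ias_col /= !mxE enum_rankK. Qed.

Lemma ias_col_psi v : ias_col e (v, i_psi) = ias_col e (v, i_chi) + ias_col e (v, i_phi).
Proof. by []. Qed.

Lemma vertex_triple_sum0 v : \sum_(a in vertex_triple v) ias_col e a = 0.
Proof.
have -> : vertex_triple v = [set (v, i) | i : 'I_3].
  apply/setP => -[u i]; rewrite inE /=.
  by apply/eqP/imsetP => [-> | [j _ [-> _]] //]; exists i.
rewrite big_imset /=; last by move=> i j _ _ [].
rewrite !big_ord_recr big_ord0.
change (0 + ias_col e (v, i_phi) + ias_col e (v, i_chi) + ias_col e (v, i_psi) = 0).
by rewrite add0r ias_col_psi [_ + ias_col e (v, i_phi)]addrC F2_addrr.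
Qed.

End IAS.

Lemma vertex_triple_inj (V : finType) : injective (@vertex_triple V).
Proof.
move=> v1 v2 /setP/(_ (v1, i_phi)).
by rewrite !inE eqxx => /esym/eqP.
Qed.

Lemma binary_rank_cycles_of_ias (U : finType) (M : matroid U) (Omega : {set {set U}})
    (V : finType) (e : rel V) (f : U -> V * 'I_3) :
  bijective f -> (forall I, indep M I = ias_indep e (f @: I)) ->
  [set f @: w | w : {set U} in Omega] = [set vertex_triple v | v : V] ->
  [/\ binary M, (mrank M <= #|Omega|)%N & forall w, w \in Omega -> in_cycle_space M w].
Proof.
move=> /bij_inj inj_f indepE classesE.
have gM I : indep M I <-> lin_indep (ias_col e \o f) I.
  by rewrite indepE /ias_indep free_imageP lin_indep_imset.
split.
- exists #|V|, (ias_col e \o f) => I.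
  by apply/idP/idP => [/gM/free_imageP | /free_imageP/gM].
- have -> : #|Omega| = #|V|.
    rewrite -(card_in_imset (f := fun w : {set U} => f @: w)); last first.
      by move=> ? ? _ _; apply: imset_inj.
    by rewrite classesE card_imset //; apply: vertex_triple_inj.
  exact: mrank_le_dim gM.
- move=> w wO; apply/(in_cycle_spaceP gM).
  have /imsetP[v _ fwE] : f @: w \in [set vertex_triple v | v : V].
    by rewrite -classesE imset_f.
  by have := vertex_triple_sum0 e v; rewrite -fwE big_imset //; move=> ? ? _ _; apply: inj_f.
Qed.

Section IASOfBinary.
Variables (U : finType) (M : matroid U) (Omega : {set {set U}}).
Hypothesis shelterM : three_sheltering M Omega.
Variables (n : nat) (col : U -> 'rV['F_2]_n).
Hypothesis colM : forall I, indep M I <-> lin_indep col I.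
Hypothesis rankM : (mrank M <= #|Omega|)%N.
Hypothesis cyclesM : forall w, w \in Omega -> in_cycle_space M w.

Local Notation cls := (pblock Omega).

Lemma triv_Omega : trivIset Omega.
Proof. by case: shelterM => -[/and3P[]]. Qed.

Lemma card_Omega w : w \in Omega -> #|w| = 3.
Proof. by case: shelterM => _; apply. Qed.

Lemma mem_cls x : x \in cls x.
Proof. by case: shelterM => -[/and3P[/eqP coverO _ _] _] _; rewrite mem_pblock coverO inE. Qed.

Lemma cls_in x : cls x \in Omega.
Proof. by apply: pblock_mem; rewrite -mem_pblock mem_cls. Qed.

Lemma cls_eq w x : w \in Omega -> x \in w -> cls x = w.
Proof. exact: def_pblock triv_Omega. Qed.

Lemma cls_same x y : y \in cls x -> cls y = cls x.
Proof. exact: same_pblock triv_Omega. Qed.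

Definition ptrans (J : {set U}) := indep M J && [forall w in Omega, #|w :&: J| <= 1]%N.

Lemma ptrans_uniq (J : {set U}) x y : ptrans J -> x \in J -> y \in J -> y \in cls x -> y = x.
Proof.
case/andP=> _ /forall_inP/(_ _ (cls_in x))/card_le1_eqP le1 xJ yJ yx.
by apply: le1; rewrite inE ?mem_cls ?yx.
Qed.

Lemma ptransS (J K : {set U}) : J \subset K -> ptrans K -> ptrans J.
Proof.
move=> JK /andP[indepK /forall_inP le1K]; rewrite /ptrans (indep_sub JK indepK).
apply/forall_inP => w wO; apply: leq_trans (le1K w wO).
by apply/subset_leq_card/setIS.
Qed.

Lemma ptransU1 (J : {set U}) z :
  ptrans J -> cls z :&: J = set0 -> indep M (z |: J) -> ptrans (z |: J).
Proof.
move=> /andP[_ /forall_inP le1J] clsJ0 indepzJ; rewrite /ptrans indepzJ.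
apply/forall_inP => w wO; rewrite setIUr.
have [zw | zNw] := boolP (z \in w).
  rewrite -(cls_eq wO zw) clsJ0 setU0.
  by rewrite (leq_trans (subset_leq_card (subsetIr _ _))) ?cards1.
have -> : w :&: [set z] = set0.
  apply/setP => y; rewrite !inE; apply/negbTE/andP => -[yw /eqP yz].
  by rewrite -yz yw in zNw.
by rewrite set0U le1J.
Qed.

Lemma exists_max_ptrans :
  exists2 B : {set U}, ptrans B & forall J, ptrans J -> (#|J| <= #|B|)%N.
Proof.
have ptrans0 : ptrans set0.
  by rewrite /ptrans indep0; apply/forall_inP => w _; rewrite setI0 cards0.
by case: (arg_maxnP (fun J : {set U} => #|J|) ptrans0) => B; exists B.
Qed.

Section Basis.
Variable B : {set U}.
Hypothesis ptB : ptrans B.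
Hypothesis maxB : forall J, ptrans J -> (#|J| <= #|B|)%N.

Lemma indepB : indep M B.
Proof. by case/andP: ptB. Qed.

Lemma ptrans_meet w : w \in Omega -> w :&: B != set0.
Proof.
move=> wO; apply/negP => /eqP wB0.
have noext z : z \in w -> ~~ indep M (z |: B).
  move=> zw; apply/negP => indep_zB.
  have zB : z \notin B by apply/negP => zB; move/setP/(_ z): wB0; rewrite !inE zw zB.
  have clsB0 : cls z :&: B = set0 by rewrite (cls_eq wO zw).
  have /maxB := ptransU1 ptB clsB0 indep_zB.
  by rewrite cardsU1 zB ltnn.
have /card_gt1P[x [y [xw yw xy]]] : (1 < #|w|)%N by rewrite card_Omega.
case: shelterM => -[_ shelter] _.
have /andP[_ /forall_inP le1B] := ptB.
move: (shelter B indepB le1B w wO wB0 x y xw yw xy).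
by rewrite (negPf (noext x xw)) (negPf (noext y yw)).
Qed.

Lemma card_indep_le (J : {set U}) : indep M J -> (#|J| <= #|B|)%N.
Proof.
move=> /indep_card_le_mrank leJ; apply: leq_trans leJ (leq_trans rankM _).
apply: leq_trans (leq_imset_card cls B); apply/subset_leq_card/subsetP => w wO.
have /set0Pn[y] := ptrans_meet wO; rewrite inE => /andP[yw yB].
by apply/imsetP; exists y; rewrite ?(cls_eq wO yw).
Qed.

Lemma col_span x : x \notin B -> exists k : U -> 'F_2, col x = \sum_(y in B) k y *: col y.
Proof.
move=> xB; apply: (lin_indepU1_span ((colM B).1 indepB) xB) => /colM/card_indep_le.
by rewrite cardsU1 xB ltnn.
Qed.

Definition vertex : finType := {x : U | x \in B}.
Implicit Types (u v : vertex) (x y z : U).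

Lemma basis_free (c : vertex -> 'F_2) : \sum_u c u *: col (val u) = 0 -> forall u, c u = 0.
Proof.
move=> sum0 u; pose k y := if insub y is Some w then c w else 0.
have kE (w : vertex) : k (val w) = c w by rewrite /k valK.
rewrite -kE; apply: ((colM B).1 indepB k) (valP u).
by rewrite big_sub -[RHS]sum0; apply: eq_bigr => w _; rewrite kE.
Qed.

Lemma coords_ex x : exists c : {ffun vertex -> 'F_2}, col x == \sum_u c u *: col (val u).
Proof.
have [xB | xNB] := boolP (x \in B).
  pose vx : vertex := Sub x xB.
  exists [ffun u => (u == vx)%:R]; apply/eqP.
  rewrite (bigD1 vx) //= ffunE eqxx scale1r big1 ?addr0 // => u /negPf uNx.
  by rewrite ffunE uNx scale0r.
have [k ->] := col_span xNB.
by exists [ffun u => k (val u)]; rewrite big_sub; apply/eqP/eq_bigr => u _; rewrite ffunE.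
Qed.

Definition bcoord x : {ffun vertex -> 'F_2} := xchoose (coords_ex x).

Lemma bcoordE x : col x = \sum_u bcoord x u *: col (val u).
Proof. exact/eqP/(xchooseP (coords_ex x)). Qed.

Lemma bcoord_unique x (c : vertex -> 'F_2) :
  col x = \sum_u c u *: col (val u) -> forall u, bcoord x u = c u.
Proof.
move=> colE u; apply/eqP; rewrite -subr_eq0; apply/eqP; move: u.
apply: basis_free; under eq_bigr do rewrite scalerBl.
by rewrite sumrB -bcoordE -colE subrr.
Qed.

Lemma bcoord_val v u : bcoord (val v) u = (u == v)%:R.
Proof.
apply: (bcoord_unique (x := val v) (c := fun w => (w == v)%:R)).
rewrite (bigD1 v) //= eqxx scale1r big1 ?addr0 // => w /negPf ->.
by rewrite scale0r.
Qed.

Lemma cls_vertex x : exists v : vertex, val v \in cls x.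
Proof.
have /set0Pn[y] := ptrans_meet (cls_in x); rewrite inE => /andP[yx yB].
by exists (Sub y yB).
Qed.

Definition vertex_of x : vertex := xchoose (cls_vertex x).

Lemma vertex_ofP x : val (vertex_of x) \in cls x.
Proof. exact: (xchooseP (cls_vertex x)). Qed.

Lemma cls_B_eq v x : x \in cls (val v) -> x \in B -> x = val v.
Proof. by move=> xv xB; apply: (ptrans_uniq ptB (valP v) xB). Qed.

Lemma vertex_of_cls v x : x \in cls (val v) -> vertex_of x = v.
Proof.
move=> xv; apply/val_inj/cls_B_eq; last exact: valP.
by rewrite -(cls_same xv) vertex_ofP.
Qed.

Lemma vertex_of_val v : vertex_of (val v) = v.
Proof. exact/vertex_of_cls/mem_cls. Qed.

Lemma mem_cls_vertex_of x : x \in cls (val (vertex_of x)).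
Proof. by rewrite (cls_same (vertex_ofP x)) mem_cls. Qed.

Lemma others_ex v :
  exists p : U * U, (p.1 != p.2) && (cls (val v) :\ val v == [set p.1; p.2]).
Proof.
have : #|cls (val v) :\ val v| == 2.
  by have := cardsD1 (val v) (cls (val v)); rewrite mem_cls card_Omega ?cls_in //; lia.
by case/cards2P => x [y [xy ->]]; exists (x, y); rewrite xy eqxx.
Qed.

Definition chi_elt v := (xchoose (others_ex v)).1.
Definition psi_elt v := (xchoose (others_ex v)).2.

Lemma chi_neq_psi v : chi_elt v != psi_elt v.
Proof. by case/andP: (xchooseP (others_ex v)). Qed.

Lemma cls_others v : cls (val v) :\ val v = [set chi_elt v; psi_elt v].
Proof. by case/andP: (xchooseP (others_ex v)) => _ /eqP. Qed.

Lemma others_notin_B v x : x \in cls (val v) :\ val v -> x \notin B.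
Proof. by rewrite !inE => /andP[xNv xv]; apply: contra xNv => /(cls_B_eq xv)/eqP. Qed.

Lemma chi_elt_cls v : chi_elt v \in cls (val v) :\ val v.
Proof. by rewrite cls_others !inE eqxx. Qed.

Lemma psi_elt_cls v : psi_elt v \in cls (val v) :\ val v.
Proof. by rewrite cls_others !inE eqxx orbT. Qed.

Lemma col_psi_elt v : col (psi_elt v) = col (chi_elt v) + col (val v).
Proof.
have := (in_cycle_spaceP colM _).1 (cyclesM (cls_in (val v))).
have vNo : val v \notin [set chi_elt v; psi_elt v] by rewrite -cls_others !inE eqxx.
rewrite -(setD1K (mem_cls (val v))) cls_others big_setU1 // big_setU1 ?inE ?chi_neq_psi //.
by rewrite big_set1 /= addrA => /eqP; rewrite addr_eq0 F2_oppr => /eqP <-; rewrite addrC.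
Qed.

Lemma bcoord_psi v u : bcoord (psi_elt v) u = bcoord (chi_elt v) u + bcoord (val v) u.
Proof.
apply: (bcoord_unique (x := psi_elt v)
  (c := fun w => bcoord (chi_elt v) w + bcoord (val v) w)).
rewrite col_psi_elt (bcoordE (chi_elt v)) (bcoordE (val v)) -big_split.
by apply: eq_bigr => w _; rewrite scalerDl.
Qed.

Lemma bcoord_B y u : y \in B -> bcoord y u = (y == val u)%:R.
Proof.
move=> yB; pose w : vertex := Sub y yB.
have -> : y = val w by rewrite SubK.
by rewrite bcoord_val eq_sym -val_eqE.
Qed.

Lemma cls_vertex_inj u v x : x \in cls (val u) -> x \in cls (val v) -> u = v.
Proof. by move=> /vertex_of_cls <- /vertex_of_cls. Qed.

Definition to_ias x : vertex * 'I_3 :=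
  (vertex_of x,
   if x \in B then i_phi else if x == chi_elt (vertex_of x) then i_chi else i_psi).

Definition of_ias (a : vertex * 'I_3) : U :=
  match nat_of_ord a.2 with 0 => val a.1 | 1 => chi_elt a.1 | _ => psi_elt a.1 end.

Lemma to_iasK : cancel to_ias of_ias.
Proof.
move=> x; rewrite /to_ias /of_ias.
have [xB | xNB] := boolP (x \in B); first by rewrite /= -(cls_B_eq (mem_cls_vertex_of x) xB).
have : x \in [set chi_elt (vertex_of x); psi_elt (vertex_of x)].
  rewrite -cls_others !inE mem_cls_vertex_of andbT.
  by apply: contraNneq xNB => ->; apply: valP.
case: ifP => [/eqP <- // | /negbT xNchi] /=.
by rewrite !inE (negPf xNchi) => /eqP <-.
Qed.

Lemma of_iasK : cancel of_ias to_ias.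
Proof.
case=> v [[|[|[|i]]] lti] //; rewrite /to_ias /of_ias /=.
- by rewrite vertex_of_val (valP v); congr pair; apply: val_inj.
- have /setD1P[_ chi_v] := chi_elt_cls v.
  rewrite (vertex_of_cls chi_v) (negPf (others_notin_B (chi_elt_cls v))) eqxx.
  by congr pair; apply: val_inj.
- have /setD1P[_ psi_v] := psi_elt_cls v.
  rewrite (vertex_of_cls psi_v) (negPf (others_notin_B (psi_elt_cls v))) eq_sym.
  by rewrite (negPf (chi_neq_psi v)); congr pair; apply: val_inj.
Qed.

Definition adj u v : bool := bcoord (chi_elt v) u == 1.

Definition coord_row x : 'rV['F_2]_#|vertex| := \row_j bcoord x (enum_val j).

Lemma coord_row_rank x u : coord_row x 0 (enum_rank u) = bcoord x u.
Proof. by rewrite mxE enum_rankK. Qed.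

Lemma col_coord_row x : col x = \sum_u coord_row x 0 (enum_rank u) *: col (val u).
Proof. by rewrite bcoordE; apply: eq_bigr => u _; rewrite coord_row_rank. Qed.

Lemma coord_rowM J : indep M J <-> lin_indep coord_row J.
Proof. by rewrite colM; exact: lin_indep_coords basis_free col_coord_row J. Qed.

Lemma ias_col_to_ias x : ias_col adj (to_ias x) = coord_row x.
Proof.
rewrite -{2}(to_iasK x); case: (to_ias x) => v [[|[|[|i]]] lti] //; apply/rowP => j.
- have -> : Ordinal lti = i_phi by apply: val_inj.
  by rewrite ias_col_phi mxE bcoord_val (can2_eq enum_valK enum_rankK).
- have -> : Ordinal lti = i_chi by apply: val_inj.
  by rewrite ias_col_chi mxE F2_nat_eq1.
- have -> : Ordinal lti = i_psi by apply: val_inj.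
  rewrite ias_col_psi mxE ias_col_chi ias_col_phi mxE /= bcoord_psi F2_nat_eq1.
  by rewrite bcoord_val (can2_eq enum_valK enum_rankK).
Qed.

Lemma to_ias_indep J : indep M J = ias_indep adj (to_ias @: J).
Proof.
have to_iasM : indep M J <-> lin_indep (ias_col adj \o to_ias) J.
  by rewrite coord_rowM; apply: eq_lin_indep => x; rewrite /= ias_col_to_ias.
have imsetE := @lin_indep_imset _ _ _ _ to_ias (ias_col adj) J (can_inj to_iasK).
rewrite /ias_indep; apply/idP/idP => [/to_iasM/imsetE/free_imageP // |].
by move=> /free_imageP/imsetE/to_iasM.
Qed.

Lemma to_ias_cls v : to_ias @: cls (val v) = vertex_triple v.
Proof.
apply/setP => -[u i]; rewrite inE /=; apply/imsetP/eqP => [[x xv /(congr1 fst) /= ->] | <-].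
  exact: vertex_of_cls.
exists (of_ias (u, i)); last by rewrite of_iasK.
rewrite /of_ias /=; case: (nat_of_ord i) => [|[|_]]; first exact: mem_cls.
  by case/setD1P: (chi_elt_cls u).
by case/setD1P: (psi_elt_cls u).
Qed.

Lemma to_ias_classes :
  [set to_ias @: w | w : {set U} in Omega] = [set vertex_triple v | v : vertex].
Proof.
apply/setP => A; apply/imsetP/imsetP => [[w wO ->] | [v _ ->]].
  have /set0Pn[y] := ptrans_meet wO; rewrite inE => /andP[yw yB].
  by exists (Sub y yB) => //; rewrite -to_ias_cls /= (cls_eq wO yw).
by exists (cls (val v)); rewrite ?cls_in ?to_ias_cls.
Qed.

Lemma indepU1_coord J x u : indep M J -> x \notin J ->
  {in J, forall y, bcoord y u = 0} -> bcoord x u != 0 -> indep M (x |: J).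
Proof.
move=> /coord_rowM indepJ xNJ J0 x0; apply/coord_rowM.
apply: (lin_indepU1_row (j := enum_rank u)) => //; last by rewrite coord_row_rank.
by move=> y yJ; rewrite coord_row_rank J0.
Qed.

(* If [adj u v] but not [adj v u], then [z |: (B :\ u :\ v)], with [z] in the class of
   [v] having coordinate 1 at [u] and 0 at [v], is an independent partial transversal
   missing the class of [u].  Sheltering extends it by some [a] in that class; as the
   [v]-coordinate vanishes on the whole class of [u], [v] can be added as well, which
   yields an independent set larger than [B]. *)
Section AdjSym.
Variables u v : vertex.
Hypotheses (neq_uv : u != v) (adj_uv : adj u v) (nadj_vu : ~~ adj v u).

Lemma bcoord_cls_u x : x \in cls (val u) -> bcoord x v = 0.
Proof.
have chi0 : bcoord (chi_elt u) v = 0.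
  by case: (F2_0or1 (bcoord (chi_elt u) v)) nadj_vu => E; rewrite /adj E ?eqxx.
have val0 : bcoord (val u) v = 0 by rewrite bcoord_val eq_sym (negPf neq_uv).
move=> xu; have [-> // | xNu] := eqVneq x (val u).
have : x \in [set chi_elt u; psi_elt u] by rewrite -cls_others !inE xNu.
by rewrite !inE => /orP[] /eqP ->; rewrite ?bcoord_psi chi0 ?val0 ?addr0.
Qed.

Let z := if bcoord (chi_elt v) v == 0 then chi_elt v else psi_elt v.

Lemma z_cls : z \in cls (val v) :\ val v.
Proof. by rewrite /z; case: ifP => _; [apply: chi_elt_cls | apply: psi_elt_cls]. Qed.

Lemma z_coord_u : bcoord z u = 1.
Proof.
rewrite /z; case: ifP => _; first exact/eqP.
by rewrite bcoord_psi (eqP adj_uv) bcoord_val (negPf neq_uv) addr0.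
Qed.

Lemma z_coord_v : bcoord z v = 0.
Proof.
rewrite /z; case: ifP => [/eqP // | /negbT chi_v].
rewrite bcoord_psi bcoord_val eqxx.
by case: (F2_0or1 (bcoord (chi_elt v) v)) chi_v => ->; rewrite ?eqxx // => _; apply: val_inj.
Qed.

Let J0 := B :\ val u :\ val v.
Let J := z |: J0.

Lemma J0B : J0 \subset B.
Proof. by apply/subsetP => y /setD1P[_ /setD1P[_]]. Qed.

Lemma z_notin_J0 : z \notin J0.
Proof. by apply: contra (others_notin_B z_cls); apply: (subsetP J0B). Qed.

Lemma indepJ : indep M J.
Proof.
apply: (indepU1_coord (u := u)) z_notin_J0 _ _; first exact: indep_sub J0B indepB.
  move=> y /[dup] /(subsetP J0B) yB /setD1P[_ /setD1P[yNu _]].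
  by rewrite bcoord_B // (negPf yNu).
by rewrite z_coord_u oner_eq0.
Qed.

Lemma ptransJ : ptrans J.
Proof.
apply: ptransU1 (ptransS J0B ptB) _ indepJ.
apply/setP => y; rewrite inE in_set0; apply/negbTE/andP => -[yz yJ0].
have /setD1P[_ zv] := z_cls.
have /setD1P[yNv /setD1P[_ yB]] := yJ0.
have yv : y \in cls (val v) by rewrite -(cls_same zv).
by rewrite (cls_B_eq yv yB) eqxx in yNv.
Qed.

Lemma cls_u_J : cls (val u) :&: J = set0.
Proof.
apply/setP => y; rewrite inE in_set0; apply/negbTE/andP => -[yu /setU1P[yz | yJ0]].
  have /setD1P[_ zv] := z_cls.
  have zu : z \in cls (val u) by rewrite -yz.
  by move: neq_uv; rewrite (cls_vertex_inj zu zv) eqxx.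
have /setD1P[_ /setD1P[yNu yB]] := yJ0.
by rewrite (cls_B_eq yu yB) eqxx in yNu.
Qed.

Lemma shelter_cls_u : exists2 a, a \in cls (val u) & indep M (a |: J).
Proof.
case: shelterM => -[_ shelter] _.
have /andP[_ /forall_inP le1J] := ptransJ.
have /setD1P[chiNu chi_u] := chi_elt_cls u.
have uNchi : val u != chi_elt u by rewrite eq_sym.
have := shelter J indepJ le1J _ (cls_in (val u)) cls_u_J _ _ (mem_cls _) chi_u uNchi.
by case/orP; [exists (val u); rewrite ?mem_cls | exists (chi_elt u)].
Qed.

Lemma adj_asym_contra : False.
Proof.
have [a au indep_aJ] := shelter_cls_u.
have aNJ : a \notin J.
  by apply/negP => aJ; move/setP/(_ a): cls_u_J; rewrite inE au aJ in_set0.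
have vNaJ : val v \notin a |: J.
  rewrite !in_setU1 !inE eqxx /= orbF; apply/norP; split.
    apply/eqP => va; have av : a \in cls (val v) by rewrite -va mem_cls.
    by move: neq_uv; rewrite (cls_vertex_inj au av) eqxx.
  by apply: contraNneq (others_notin_B z_cls) => <-; apply: valP.
have indep_vaJ : indep M (val v |: (a |: J)).
  apply: (indepU1_coord (u := v)) vNaJ _ _ => //; last by rewrite bcoord_val eqxx oner_eq0.
  move=> y /setU1P[-> | /setU1P[-> | /[dup] /(subsetP J0B) yB /setD1P[yNv _]]].
  - exact: bcoord_cls_u.
  - exact: z_coord_v.
  - by rewrite bcoord_B // (negPf yNv).
have cardB : #|B| = #|J0|.+2.
  rewrite (cardsD1 (val u) B) (cardsD1 (val v) (B :\ val u)) (valP u) !inE (valP v).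
  by rewrite val_eqE eq_sym neq_uv.
have := card_indep_le indep_vaJ.
by rewrite !cardsU1 vNaJ aNJ z_notin_J0 cardB !add1n ltnn.
Qed.

End AdjSym.

Lemma adj_sym : symmetric adj.
Proof.
move=> u v; have [-> // | neq_uv] := eqVneq u v.
apply/idP/idP => adjuv; apply/negPn/negP => nadj.
  exact: adj_asym_contra neq_uv adjuv nadj.
by apply: adj_asym_contra adjuv nadj; rewrite eq_sym.
Qed.

Lemma ias_of_binary : exists (V : finType) (e : rel V) (f : U -> V * 'I_3),
  [/\ symmetric e, bijective f, forall I, indep M I = ias_indep e (f @: I) &
      [set f @: w | w : {set U} in Omega] = [set vertex_triple v | v : V]].
Proof.
exists vertex, adj, to_ias; split.
- exact: adj_sym.
- exact: Bijective to_iasK of_iasK.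
- exact: to_ias_indep.
- exact: to_ias_classes.
Qed.

End Basis.

End IASOfBinary.

Theorem theorem2p11 (U : finType) (M : matroid U) (Omega : {set {set U}}) :
  three_sheltering M Omega ->
  ([/\ binary M, (mrank M <= #|Omega|)%N &
       forall w, w \in Omega -> in_cycle_space M w]
   <->
   exists (V : finType) (e : rel V) (f : U -> V * 'I_3),
     [/\ symmetric e, bijective f,
         forall I : {set U}, indep M I = ias_indep e (f @: I) &
         [set f @: w | w : {set U} in Omega] = [set vertex_triple v | v : V]]).
Proof.
move=> shelterM; split.
- case=> -[n [col colE]] rankM cyclesM.
  have colM I : indep M I <-> lin_indep col I by rewrite colE free_imageP.
  have [B ptB maxB] := exists_max_ptrans M Omega.
  exact (ias_of_binary shelterM colM rankM cyclesM ptB maxB).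
- case=> V [e [f [_ bij_f indepE classesE]]].
  exact (binary_rank_cycles_of_ias bij_f indepE classesE).
Qed.
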